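(* Assume $f:[a,b]\to\mathbb{R}$ has an analytic extension. Then there exist constants $C,\gamma>0$, depending only on $f$, such that for every $L\in\mathbb{N}$ there exists a ReLU neural network $\Phi_L:\mathbb{R}\to\mathbb{R}$ with \[ \sup_{x\in[a,b]}|f(x)-\Phi_L(x)|\le C\exp(-\gamma L^{1/2}),\qquad \mathrm{depth}(\Phi_L)\le CL,\qquad \mathrm{width}(\Phi_L)\le C. \]
   Context: A function $F:(\alpha,\beta)\to\mathbb{R}$ is analytic if for every $x_0\in(\alpha,\beta)$ there are $r>0$ and $(a_k)_{k\ge0}$ with $\sum_k|a_k|r^k<\infty$ and $F(x)=\sum_ka_k(x-x_0)^k$ for $|x-x_0|<r$. A function $f:[a,b]\to\mathbb{R}$ has an analytic extension if there is an analytic $F:(\alpha,\beta)\to\mathbb{R}$ with $[a,b]\subset(\alpha,\beta)$ and $F=f$ on $[a,b]$. For a neural network, depth is the number of hidden layers and width the maximal number of neurons in a hidden layer; ReLU is $\sigma(x)=\max(x,0)$. *)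

From Stdlib Require Import Reals List.
From Coquelicot Require Import Coquelicot.
Open Scope R_scope.

Definition analytic_on (alpha beta : R) (F : R -> R) : Prop :=
  forall x0, alpha < x0 < beta ->
    exists (r : R) (a : nat -> R),
      0 < r /\
      ex_series (fun k => Rabs (a k) * r ^ k) /\
      (forall x, alpha < x < beta -> Rabs (x - x0) < r ->
         is_series (fun k => a k * (x - x0) ^ k) (F x)).

Definition has_analytic_extension (a b : R) (f : R -> R) : Prop :=
  exists (alpha beta : R) (F : R -> R),
    alpha < a /\ b < beta /\ analytic_on alpha beta F /\
    (forall x, a <= x <= b -> F x = f x).

Definition relu (x : R) : R := Rmax x 0.

Fixpoint fsum (m : nat) (f : nat -> R) : R :=
  match m with
  | O => 0
  | S m' => fsum m' f + f m'
  end.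

Record layer := Layer { lout : nat; lW : nat -> nat -> R; lb : nat -> R }.

(** Vectors are represented as nat -> R; only the
    first d coordinates (d = current width) are used. *)
Record network := Network { hidden : list layer; outW : nat -> R; outb : R }.

Fixpoint eval_hidden (ls : list layer) (din : nat) (v : nat -> R)
  : nat * (nat -> R) :=
  match ls with
  | nil => (din, v)
  | l :: ls' =>
      eval_hidden ls' (lout l)
        (fun i => relu (fsum din (fun j => lW l i j * v j) + lb l i))
  end.

Definition realize (N : network) (x : R) : R :=
  let '(d, v) := eval_hidden (hidden N) 1%nat (fun _ => x) in
  fsum d (fun j => outW N j * v j) + outb N.

Definition depth (N : network) : nat := length (hidden N).
Definition width (N : network) : nat :=
  fold_right (fun l m => Nat.max (lout l) m) 0%nat (hidden N).

From Stdlib Require Import Reals.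
From Coquelicot Require Import Coquelicot.
From Stdlib Require Import Lra Lia List Classical IndefiniteDescription.
Open Scope R_scope.

(* Around each point, [f] is the sum of a power series in [s = (y - t) / r] with [|s| <= 1/2] and
   summable coefficients, so truncating after [k] terms costs [O(2^-k)]; by compactness finitely
   many such pieces cover [[a, b]].  Writing [f x = f a + sum_i (f (clamp_i x) - f c_i)], each
   piece is evaluated by Horner's scheme, whose [k] multiplications [s y] are computed from squares
   of numbers in [[0, 1]], and a square is approximated to accuracy [4^-m] by [m] layers of
   Yarotsky's sawtooth construction.  With [k = sqrt L] and [m = k + O(1)] the network has width
   10, depth [O(k^2) = O(L)] and error [O(2^-k)]. *)

Arguments relu : simpl never.

Lemma relu_id z : 0 <= z -> relu z = z.
Proof. intros; unfold relu, Rmax; destruct (Rle_dec z 0); lra. Qed.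

Lemma relu_eq0 z : z <= 0 -> relu z = 0.
Proof. intros; unfold relu, Rmax; destruct (Rle_dec z 0); lra. Qed.

Lemma relu_ge0 z : 0 <= relu z.
Proof. unfold relu, Rmax; destruct (Rle_dec z 0); lra. Qed.

Lemma relu_relu z : relu (relu z) = relu z.
Proof. apply relu_id, relu_ge0. Qed.

Definition clamp (x lo hi : R) : R := lo + relu (x - lo) - relu (x - hi).

Lemma clamp_range x lo hi : lo <= hi -> lo <= clamp x lo hi <= hi.
Proof.
  intros H; unfold clamp. destruct (Rle_dec x lo).
  - rewrite (relu_eq0 (x - lo)), (relu_eq0 (x - hi)) by lra; lra.
  - rewrite (relu_id (x - lo)) by lra. destruct (Rle_dec x hi).
    + rewrite relu_eq0 by lra; lra.
    + rewrite relu_id by lra; lra.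
Qed.

Lemma clamp_id x lo hi : lo <= x <= hi -> clamp x lo hi = x.
Proof. intros H; unfold clamp. rewrite relu_id, relu_eq0 by lra. ring. Qed.

Lemma clamp_left x lo hi : x <= lo -> lo <= hi -> clamp x lo hi = lo.
Proof. intros; unfold clamp. rewrite !relu_eq0 by lra. ring. Qed.

Lemma clamp_right x lo hi : lo <= x -> clamp x lo hi = x - relu (x - hi).
Proof. intros; unfold clamp. rewrite relu_id by lra. ring. Qed.

Lemma fsum_ext n f g : (forall j, (j < n)%nat -> f j = g j) -> fsum n f = fsum n g.
Proof.
  induction n; intros H; simpl; auto.
  rewrite IHn by (intros; apply H; lia). rewrite H by lia; reflexivity.
Qed.

Lemma fsum_const0 n : fsum n (fun _ => 0) = 0.
Proof. induction n; simpl; lra. Qed.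

Lemma fsum_add n f g : fsum n (fun j => f j + g j) = fsum n f + fsum n g.
Proof. induction n; simpl; lra. Qed.

Lemma fsum_sub n f g : fsum n (fun j => f j - g j) = fsum n f - fsum n g.
Proof. induction n; simpl; lra. Qed.

Lemma fsum_scal n c f : fsum n (fun j => c * f j) = c * fsum n f.
Proof. induction n; simpl; [lra|rewrite IHn; ring]. Qed.

Lemma fsum_delta n i v : (i < n)%nat ->
  fsum n (fun j => (if Nat.eqb j i then 1 else 0) * v j) = v i.
Proof.
  induction n; intros Hi; simpl; [lia|].
  destruct (Nat.eqb_spec n i) as [->|Hne].
  - rewrite (fsum_ext _ _ (fun _ => 0)), fsum_const0; [lra|].
    intros j Hj. destruct (Nat.eqb_spec j i); [lia|lra].
  - rewrite IHn by lia. lra.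
Qed.

Lemma fsum_nonneg n f : (forall k, 0 <= f k) -> 0 <= fsum n f.
Proof. intros H; induction n; simpl; [lra|]. specialize (H n); lra. Qed.

Lemma fsum_term_le n f i : (forall k, 0 <= f k) -> (i < n)%nat -> f i <= fsum n f.
Proof.
  intros Hf Hi. induction n; [lia|]. simpl.
  destruct (Nat.eq_dec i n) as [->|Hne].
  - pose proof (fsum_nonneg n f Hf); lra.
  - pose proof (Hf n). assert (f i <= fsum n f) by (apply IHn; lia). lra.
Qed.

Lemma Rabs_fsum_le n g B : (forall i, (i < n)%nat -> Rabs (g i) <= B) ->
  Rabs (fsum n g) <= INR n * B.
Proof.
  induction n; intros H; simpl fsum; [rewrite Rabs_R0; simpl; lra|].
  rewrite S_INR. eapply Rle_trans; [apply Rabs_triang|].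
  assert (Rabs (fsum n g) <= INR n * B) by (apply IHn; intros; apply H; lia).
  assert (Rabs (g n) <= B) by (apply H; lia). lra.
Qed.


Lemma growing_seq_le (cc : nat -> R) : (forall i, cc i <= cc (S i)) ->
  forall i j, (i <= j)%nat -> cc i <= cc j.
Proof.
  intros Hc i j Hij. induction Hij; [lra|]. specialize (Hc m); lra.
Qed.

Lemma clamp_telescope (g : R -> R) (cc : nat -> R) x : (forall i, cc i <= cc (S i)) ->
  forall n, fsum n (fun i => g (clamp x (cc i) (cc (S i))) - g (cc i))
            = g (clamp x (cc 0%nat) (cc n)) - g (cc 0%nat).
Proof.
  intros Hc n. induction n; simpl fsum.
  - replace (clamp x (cc 0%nat) (cc 0%nat)) with (cc 0%nat) by (unfold clamp; ring). ring.
  - rewrite IHn. pose proof (Hc n). pose proof (growing_seq_le cc Hc 0 n (Nat.le_0_l n)).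
    destruct (Rle_dec x (cc n)).
    + rewrite (clamp_left x (cc n)) by lra.
      replace (clamp x (cc 0%nat) (cc (S n))) with (clamp x (cc 0%nat) (cc n)); [ring|].
      unfold clamp. rewrite (relu_eq0 (x - cc n)), (relu_eq0 (x - cc (S n))) by lra. ring.
    + replace (clamp x (cc 0%nat) (cc n)) with (cc n)
        by (unfold clamp; rewrite !relu_id by lra; ring).
      replace (clamp x (cc n) (cc (S n))) with (clamp x (cc 0%nat) (cc (S n)))
        by (rewrite !clamp_right by lra; reflexivity).
      ring.
Qed.

Definition aform := ((nat -> R) * R)%type.
Definition avar (j : nat) : aform := (fun k => if Nat.eqb k j then 1 else 0, 0).
Definition acst (c : R) : aform := (fun _ => 0, c).
Definition aadd (e1 e2 : aform) : aform := (fun k => fst e1 k + fst e2 k, snd e1 + snd e2).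
Definition ascal (c : R) (e : aform) : aform := (fun k => c * fst e k, c * snd e).
Definition aeval (d : nat) (e : aform) (v : nat -> R) : R := fsum d (fun j => fst e j * v j) + snd e.
Arguments aeval : simpl never.

Lemma aeval_var d j v : (j < d)%nat -> aeval d (avar j) v = v j.
Proof. intros; unfold aeval, avar; simpl. rewrite fsum_delta; auto; lra. Qed.

Lemma aeval_cst d c v : aeval d (acst c) v = c.
Proof.
  unfold aeval, acst; simpl.
  rewrite (fsum_ext _ _ (fun _ => 0)), fsum_const0; [lra|intros; lra].
Qed.

Lemma aeval_add d e1 e2 v : aeval d (aadd e1 e2) v = aeval d e1 v + aeval d e2 v.
Proof.
  unfold aeval, aadd; simpl.
  rewrite (fsum_ext _ _ (fun j => fst e1 j * v j + fst e2 j * v j)), fsum_add; [lra|intros; lra].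
Qed.

Lemma aeval_scal d c e v : aeval d (ascal c e) v = c * aeval d e v.
Proof.
  unfold aeval, ascal; simpl.
  rewrite (fsum_ext _ _ (fun j => c * (fst e j * v j))), fsum_scal; [lra|intros; lra].
Qed.

Definition regs := 10%nat.

Ltac aeval_simpl :=
  repeat (rewrite ?aeval_add, ?aeval_scal, ?aeval_cst;
          try (rewrite aeval_var by (unfold regs in *; lia))).

Definition layer_of (S : nat -> aform) : layer :=
  Layer regs (fun i j => fst (S i) j) (fun i => snd (S i)).

Lemma eval_hidden_app l1 l2 d v : eval_hidden (l1 ++ l2) d v =
  eval_hidden l2 (fst (eval_hidden l1 d v)) (snd (eval_hidden l1 d v)).
Proof. revert d v; induction l1; intros; simpl; auto. Qed.

Definition Hoare (ls : list layer) (Pre Post : (nat -> R) -> Prop) : Prop :=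
  forall v, Pre v -> Post (snd (eval_hidden ls regs v)) /\ fst (eval_hidden ls regs v) = regs.

Lemma hoare_nil P : Hoare nil P P.
Proof. intros v H; simpl; auto. Qed.

Lemma hoare_app l1 l2 P Q R : Hoare l1 P Q -> Hoare l2 Q R -> Hoare (l1 ++ l2) P R.
Proof.
  intros H1 H2 v Hv. rewrite eval_hidden_app. destruct (H1 v Hv) as [HQ ->]. auto.
Qed.

Lemma hoare_cons S ls P Q R :
  (forall v, P v -> Q (fun i => relu (aeval regs (S i) v))) -> Hoare ls Q R ->
  Hoare (layer_of S :: ls) P R.
Proof. intros H1 H2 v Hv. apply (H2 _ (H1 v Hv)). Qed.

Definition all_full_width (ls : list layer) : Prop := Forall (fun l => lout l = regs) ls.

Lemma all_full_width_app l1 l2 :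
  all_full_width l1 -> all_full_width l2 -> all_full_width (l1 ++ l2).
Proof. intros; apply Forall_app; auto. Qed.

Lemma width_le_regs ls :
  all_full_width ls -> (fold_right (fun l m => Nat.max (lout l) m) 0 ls <= regs)%nat.
Proof. induction 1; simpl; [lia|]. rewrite H. lia. Qed.

(* Yarotsky's identity [G - G^2 = g G / 4 + (g G - (g G)^2) / 4] for the tooth map [g] gives
   [w^2 = w - sum_(s >= 1) g^s w / 4^s]; each sawtooth layer subtracts one more term. *)
Definition sq_defect (G : R) : R := G * (1 - G).
Definition tooth (G : R) : R := 2 * G - 4 * relu (G - 1/2).

Lemma tooth_range G : 0 <= G <= 1 -> 0 <= tooth G <= 1.
Proof.
  intros HG; unfold tooth. destruct (Rle_dec G (1/2)).
  - rewrite relu_eq0 by lra; lra.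
  - rewrite relu_id by lra; lra.
Qed.

Lemma sq_defect_tooth G : 0 <= G <= 1 -> sq_defect G = tooth G / 4 + sq_defect (tooth G) / 4.
Proof.
  intros HG; unfold tooth, sq_defect. destruct (Rle_dec G (1/2)).
  - rewrite relu_eq0 by lra. field.
  - rewrite relu_id by lra. field.
Qed.

Lemma sq_defect_range G : 0 <= G <= 1 -> 0 <= sq_defect G <= 1/4.
Proof. intros; unfold sq_defect; pose proof (pow2_ge_0 (G - 1/2)); split; nra. Qed.

Fixpoint horner (be : nat -> R) (s : R) (k : nat) (y : R) : R :=
  match k with O => y | S k' => horner be s k' (be k' + s * y) end.

Lemma horner_eq be s k y : horner be s k y = fsum k (fun j => be j * s ^ j) + s ^ k * y.
Proof. revert y; induction k; intros y; simpl; [ring|]. rewrite IHk. ring. Qed.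

Lemma horner_bound be s M B k y : (forall j, Rabs (be j) <= M) -> Rabs s <= 1/2 -> 2 * M <= B ->
  Rabs y <= B -> Rabs (horner be s k y) <= B.
Proof.
  intros Hb Hs HB. revert y; induction k; intros y Hy; simpl; auto. apply IHk.
  eapply Rle_trans; [apply Rabs_triang|]. rewrite Rabs_mult.
  assert (Rabs s * Rabs y <= 1/2 * B) by (apply Rmult_le_compat; auto; apply Rabs_pos).
  specialize (Hb k). lra.
Qed.

(* Registers: 0 holds [x - a], 1 an accumulator, 2 and 3 hold [relu (x - c)] and [relu (x - c')],
   4-6 and 7-9 are two squaring units [G, relu (G - 1/2), approximate square]. *)
Section Gadgets.
Variables (A x a c c' t r : R).

Definition s_form : aform :=
  aadd (ascal (/r) (aadd (avar 2) (ascal (-1) (avar 3)))) (acst ((c - t) / r)).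
Definition horner_form (b : R) : aform :=
  aadd (acst b) (aadd (ascal (A^2) (aadd (avar 6) (ascal (-1) (avar 9)))) (ascal (-A) s_form)).
Definition w1_form (b : R) : aform :=
  aadd (ascal (/(2*A)) (aadd s_form (horner_form b))) (acst (1/2)).
Definition w2_form (b : R) : aform :=
  aadd (ascal (/(2*A)) (aadd (horner_form b) (ascal (-1) s_form))) (acst (1/2)).
Definition tooth_form (i : nat) : aform := aadd (ascal 2 (avar i)) (ascal (-4) (avar (S i))).

Definition ClampL : layer := layer_of (fun i => match i with
  | 0 => avar 0 | 1 => avar 1
  | 2 => aadd (avar 0) (acst (a - c)) | 3 => aadd (avar 0) (acst (a - c'))
  | _ => acst 0 end).
Definition MulInitL (b : R) : layer := layer_of (fun i => match i with
  | 0 => avar 0 | 1 => avar 1 | 2 => avar 2 | 3 => avar 3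
  | 4 => w1_form b | 5 => aadd (w1_form b) (acst (-1/2)) | 6 => w1_form b
  | 7 => w2_form b | 8 => aadd (w2_form b) (acst (-1/2)) | 9 => w2_form b
  | _ => acst 0 end).
Definition SawL (s : nat) : layer := layer_of (fun i => match i with
  | 0 => avar 0 | 1 => avar 1 | 2 => avar 2 | 3 => avar 3
  | 4 => tooth_form 4 | 5 => aadd (tooth_form 4) (acst (-1/2))
  | 6 => aadd (avar 6) (ascal (- / 4 ^ (S s)) (tooth_form 4))
  | 7 => tooth_form 7 | 8 => aadd (tooth_form 7) (acst (-1/2))
  | 9 => aadd (avar 9) (ascal (- / 4 ^ (S s)) (tooth_form 7))
  | _ => acst 0 end).
(* The Horner value is shifted by [A] to be nonnegative, so that it survives the ReLU when added
   to the accumulator; the output bias removes the shifts. *)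
Definition AccL (b : R) : layer := layer_of (fun i => match i with
  | 0 => avar 0 | 1 => aadd (avar 1) (aadd (horner_form b) (acst A))
  | _ => acst 0 end).

Fixpoint saw_layers (s m : nat) : list layer :=
  match m with O => nil | S m' => SawL s :: saw_layers (S s) m' end.

Definition Base (acc : R) (v : nat -> R) : Prop := v 0%nat = x - a /\ v 1%nat = acc.
Definition ClampOk (v : nat -> R) : Prop := v 2%nat = relu (x - c) /\ v 3%nat = relu (x - c').
Definition Carried (acc : R) (v : nat -> R) : Prop := Base acc v /\ ClampOk v.
Definition s_val : R := (clamp x c c' - t) / r.
Definition horner_val (b : R) (v : nat -> R) : R := b + A^2 * (v 6%nat - v 9%nat) - A * s_val.
Definition SquareReg (s : nat) (w : R) (v : nat -> R) (i : nat) : Prop :=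
  exists G, 0 <= G <= 1 /\ v i = G /\ v (S i) = relu (G - 1/2) /\
            v (S (S i)) = w^2 + sq_defect G / 4 ^ s.

Hypothesis Hr : r <> 0.
Hypothesis HA : 0 < A.
Hypothesis Hxa : a <= x.

Lemma aeval_s_form v : ClampOk v -> aeval regs s_form v = s_val.
Proof. intros [H2 H3]. unfold s_form, s_val, clamp; aeval_simpl. rewrite H2, H3. field. auto. Qed.

Lemma aeval_horner_form b v : ClampOk v -> aeval regs (horner_form b) v = horner_val b v.
Proof. intros H. unfold horner_form, horner_val; aeval_simpl. rewrite aeval_s_form by auto. ring. Qed.

Lemma aeval_w1_form b v : ClampOk v ->
  aeval regs (w1_form b) v = (s_val + horner_val b v) / (2*A) + 1/2.
Proof.
  intros H. unfold w1_form. rewrite aeval_add, aeval_scal, aeval_add, aeval_s_form,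
    aeval_horner_form, aeval_cst by auto. unfold Rdiv; ring.
Qed.

Lemma aeval_w2_form b v : ClampOk v ->
  aeval regs (w2_form b) v = (horner_val b v - s_val) / (2*A) + 1/2.
Proof.
  intros H. unfold w2_form. rewrite aeval_add, aeval_scal, aeval_add, aeval_scal, aeval_s_form,
    aeval_horner_form, aeval_cst by auto. unfold Rdiv; ring.
Qed.

Lemma carry_base_clamp N acc v : 0 <= acc ->
  N 0%nat = avar 0 -> N 1%nat = avar 1 -> N 2%nat = avar 2 -> N 3%nat = avar 3 ->
  Carried acc v -> Carried acc (fun i => relu (aeval regs (N i) v)).
Proof.
  intros Hacc E0 E1 E2 E3 [[B0 B1] [C2 C3]]. unfold Carried, Base, ClampOk. rewrite E0, E1, E2, E3.
  repeat split; aeval_simpl.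
  - rewrite B0; apply relu_id; lra.
  - rewrite B1; apply relu_id; lra.
  - rewrite C2; apply relu_relu.
  - rewrite C3; apply relu_relu.
Qed.

Lemma square_reg_init w v i : 0 <= w <= 1 -> v i = relu w -> v (S i) = relu (w - 1/2) ->
  v (S (S i)) = relu w -> SquareReg 0 w v i.
Proof.
  intros Hw E0 E1 E2. exists w. rewrite relu_id in E0, E2 by lra.
  repeat split; auto; try lra. rewrite E2. unfold sq_defect. simpl. field.
Qed.

Lemma square_reg_step s w v i : (i + 2 < regs)%nat -> SquareReg s w v i ->
  SquareReg (S s) w (fun k => relu (aeval regs (if Nat.eqb k i then tooth_form i else
        if Nat.eqb k (S i) then aadd (tooth_form i) (acst (-1/2)) else
        aadd (avar (S (S i))) (ascal (- / 4 ^ (S s)) (tooth_form i))) v)) i.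
Proof.
  intros Hi [G [HG [H0 [H1 H2]]]].
  pose proof (tooth_range G HG) as Hg.
  assert (Htooth : aeval regs (tooth_form i) v = tooth G).
  { unfold tooth_form; aeval_simpl. rewrite H0, H1. unfold tooth; ring. }
  assert (Hn1 : Nat.eqb (S i) i = false) by (apply Nat.eqb_neq; lia).
  assert (Hn2 : Nat.eqb (S (S i)) i = false) by (apply Nat.eqb_neq; lia).
  assert (Hn3 : Nat.eqb (S (S i)) (S i) = false) by (apply Nat.eqb_neq; lia).
  exists (tooth G). rewrite Hn1, Hn2, Hn3, !Nat.eqb_refl, Htooth, relu_id by lra.
  split; [exact Hg|split; [reflexivity|split]].
  - rewrite aeval_add, Htooth, aeval_cst. f_equal; lra.
  - rewrite aeval_add, aeval_scal, Htooth, aeval_var by (unfold regs in *; lia). rewrite H2.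
    pose proof (pow_lt 4 s ltac:(lra)). pose proof (sq_defect_range (tooth G) Hg).
    pose proof (pow2_ge_0 w).
    replace (w ^ 2 + sq_defect G / 4 ^ s + - / 4 ^ S s * tooth G)
      with (w^2 + sq_defect (tooth G) / 4 ^ S s)
      by (rewrite (sq_defect_tooth G HG); simpl; field; lra).
    apply relu_id, Rplus_le_le_0_compat; [lra|].
    apply Rmult_le_pos; [lra|]. left; apply Rinv_0_lt_compat, pow_lt; lra.
Qed.

Lemma square_reg_ext s w v v' i : v' i = v i -> v' (S i) = v (S i) -> v' (S (S i)) = v (S (S i)) ->
  SquareReg s w v i -> SquareReg s w v' i.
Proof. intros E0 E1 E2 [G HG]. exists G. rewrite E0, E1, E2; auto. Qed.

Lemma saw_layers_spec m : forall s w1 w2 acc, 0 <= acc ->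
  Hoare (saw_layers s m)
    (fun v => Carried acc v /\ SquareReg s w1 v 4 /\ SquareReg s w2 v 7)
    (fun v => Carried acc v /\ SquareReg (s + m) w1 v 4 /\ SquareReg (s + m) w2 v 7).
Proof.
  induction m; intros s w1 w2 acc Hacc.
  - rewrite Nat.add_0_r. apply hoare_nil.
  - apply hoare_cons with
      (Q := fun v => Carried acc v /\ SquareReg (S s) w1 v 4 /\ SquareReg (S s) w2 v 7).
    + intros v [HC [S1 S2]]. split; [apply carry_base_clamp; auto|split].
      * exact (square_reg_ext _ _ _ _ _ eq_refl eq_refl eq_refl
                 (square_reg_step s w1 v 4 ltac:(unfold regs; lia) S1)).
      * exact (square_reg_ext _ _ _ _ _ eq_refl eq_refl eq_refl
                 (square_reg_step s w2 v 7 ltac:(unfold regs; lia) S2)).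
    + replace (s + S m)%nat with (S s + m)%nat by lia. apply IHm; auto.
Qed.

Lemma unit_shift u : Rabs u <= A -> 0 <= u / (2*A) + 1/2 <= 1.
Proof.
  intros Hu. apply Rabs_le_between in Hu.
  replace (u / (2*A) + 1/2) with ((u + A) * / (2*A)) by (field; lra).
  assert (0 < / (2*A)) by (apply Rinv_0_lt_compat; lra).
  assert (2 * A * / (2*A) = 1) by (field; lra). split; nra.
Qed.

Lemma mul_init_spec b m acc y : 0 <= acc -> Rabs (s_val + y) <= A -> Rabs (y - s_val) <= A ->
  Hoare (MulInitL b :: saw_layers 0 m)
    (fun v => Carried acc v /\ horner_val b v = y)
    (fun v => Carried acc v /\ SquareReg m ((s_val + y) / (2*A) + 1/2) v 4 /\
                               SquareReg m ((y - s_val) / (2*A) + 1/2) v 7).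
Proof.
  intros Hacc H1 H2.
  apply hoare_cons with (Q := fun v => Carried acc v /\
    SquareReg 0 ((s_val + y) / (2*A) + 1/2) v 4 /\ SquareReg 0 ((y - s_val) / (2*A) + 1/2) v 7).
  - intros v [HC Hy]. pose proof HC as [_ HCl]. split; [apply carry_base_clamp; auto|split].
    + apply square_reg_init; [apply unit_shift; auto|..]; cbn beta iota;
        rewrite ?aeval_add, ?aeval_cst, aeval_w1_form, Hy by exact HCl; f_equal; lra.
    + apply square_reg_init; [apply unit_shift; auto|..]; cbn beta iota;
        rewrite ?aeval_add, ?aeval_cst, aeval_w2_form, Hy by exact HCl; f_equal; lra.
  - apply (saw_layers_spec m 0); auto.
Qed.

(* [s y = A^2 (w1^2 - w2^2) - A s] for [w1, w2 = (y +- s)/(2A) + 1/2]. *)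
Lemma horner_val_of_squares b m y v :
  SquareReg m ((s_val + y) / (2*A) + 1/2) v 4 -> SquareReg m ((y - s_val) / (2*A) + 1/2) v 7 ->
  Rabs (horner_val b v - (b + s_val * y)) <= A^2 / 4 ^ S m.
Proof.
  intros [G1 [HG1 [_ [_ E1]]]] [G2 [HG2 [_ [_ E2]]]].
  unfold horner_val. rewrite E1, E2.
  pose proof (sq_defect_range _ HG1). pose proof (sq_defect_range _ HG2).
  pose proof (pow_lt 4 m ltac:(lra)).
  match goal with |- Rabs ?e <= _ =>
    replace e with (A^2 / 4^m * (sq_defect G1 - sq_defect G2)) by (field; lra) end.
  rewrite Rabs_mult, (Rabs_pos_eq (A^2 / 4^m)) by (apply Rle_mult_inv_pos; nra).
  replace (A^2 / 4 ^ S m) with (A^2 / 4^m * (1/4)) by (simpl; field; lra).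
  apply Rmult_le_compat_l; [apply Rle_mult_inv_pos; nra|]. apply Rabs_le. lra.
Qed.

Lemma mul_block_spec b b' m acc y dl : 0 <= acc -> Rabs s_val <= 1/2 ->
  Rabs y + 2 * dl + 1/2 <= A -> A^2 / 4 ^ S m <= dl ->
  Hoare (MulInitL b :: saw_layers 0 m)
    (fun v => Carried acc v /\ Rabs (horner_val b v - y) <= 2 * dl)
    (fun v => Carried acc v /\ Rabs (horner_val b' v - (b' + s_val * y)) <= 2 * dl).
Proof.
  intros Hacc Hs Hy Hdl v0 [HC Hy0].
  set (y' := horner_val b v0) in *.
  assert (Hy' : Rabs y' <= Rabs y + 2 * dl).
  { replace y' with (y + (y' - y)) by ring. pose proof (Rabs_triang y (y' - y)). lra. }
  assert (H1 : Rabs (s_val + y') <= A) by (pose proof (Rabs_triang s_val y'); lra).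
  assert (H2 : Rabs (y' - s_val) <= A).
  { unfold Rminus. pose proof (Rabs_triang y' (- s_val)). rewrite Rabs_Ropp in *. lra. }
  destruct (mul_init_spec b m acc y' Hacc H1 H2 v0 (conj HC eq_refl)) as [[HC' [Sq1 Sq2]] Hd].
  split; [split; [exact HC'|]|exact Hd].
  pose proof (horner_val_of_squares b' m y' _ Sq1 Sq2) as Hmul.
  match goal with |- Rabs (?h - _) <= _ =>
    replace (h - (b' + s_val * y)) with ((h - (b' + s_val * y')) + s_val * (y' - y)) by ring end.
  eapply Rle_trans; [apply Rabs_triang|]. rewrite Rabs_mult.
  assert (Rabs s_val * Rabs (y' - y) <= 1/2 * (2 * dl))
    by (apply Rmult_le_compat; auto; apply Rabs_pos).
  lra.
Qed.

Fixpoint horner_layers (be : nat -> R) (m k : nat) : list layer :=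
  match k with
  | O => nil
  | S k' => MulInitL (be (S k')) :: saw_layers 0 m ++ horner_layers be m k'
  end.

Lemma horner_layers_spec be M m dl acc : (forall j, Rabs (be j) <= M) -> Rabs s_val <= 1/2 ->
  2 * M + A/2 + 2 * dl + 1/2 <= A -> A^2 / 4 ^ S m <= dl -> 0 <= acc ->
  forall k y, Rabs y <= 2 * M + A/2 ->
  Hoare (horner_layers be m k)
    (fun v => Carried acc v /\ Rabs (horner_val (be k) v - y) <= 2 * dl)
    (fun v => Carried acc v /\ Rabs (horner_val (be 0%nat) v - horner be s_val k y) <= 2 * dl).
Proof.
  intros Hb Hs HAM Hdl Hacc k. induction k as [|k IH]; intros y Hy; [apply hoare_nil|].
  eapply (hoare_app (MulInitL (be (S k)) :: saw_layers 0 m)).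
  - apply mul_block_spec; auto; lra.
  - apply IH. eapply Rle_trans; [apply Rabs_triang|]. rewrite Rabs_mult.
    assert (Rabs s_val * Rabs y <= 1/2 * (2 * M + A/2))
      by (apply Rmult_le_compat; auto; apply Rabs_pos).
    specialize (Hb k). lra.
Qed.

(* The squaring registers start empty, so Horner's scheme starts from [be n - A s] instead of
   [be n]; the extra term [s^n (be n - A s)] is of the order of the truncation error. *)
Definition piece_layers (be : nat -> R) (m n : nat) : list layer :=
  ClampL :: horner_layers be m n ++ AccL (be 0%nat) :: nil.

Lemma piece_spec be M m n dl acc : (forall j, Rabs (be j) <= M) -> Rabs s_val <= 1/2 ->
  2 * M + A/2 + 2 * dl + 1/2 <= A -> A^2 / 4 ^ S m <= dl -> 0 <= acc ->
  Hoare (piece_layers be m n) (Base acc)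
    (fun v => v 0%nat = x - a /\ 0 <= v 1%nat /\
       Rabs (v 1%nat - acc - A - horner be s_val n (be n - A * s_val)) <= 2 * dl).
Proof.
  intros Hb Hs HAM Hdl Hacc.
  assert (Hdl0 : 0 <= dl)
    by (eapply Rle_trans; [|exact Hdl]; apply Rle_mult_inv_pos; [nra|apply pow_lt; lra]).
  assert (HM : 0 <= M) by (pose proof (Hb 0%nat); pose proof (Rabs_pos (be 0%nat)); lra).
  assert (Hy0 : Rabs (be n - A * s_val) <= 2 * M + A/2).
  { unfold Rminus. eapply Rle_trans; [apply Rabs_triang|].
    rewrite Rabs_Ropp, Rabs_mult, (Rabs_pos_eq A) by lra.
    assert (A * Rabs s_val <= A * (1/2)) by (apply Rmult_le_compat_l; lra).
    specialize (Hb n). lra. }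
  pose proof (horner_bound be s_val M (2 * M + A/2) n _ Hb Hs ltac:(lra) Hy0) as Hrun.
  apply hoare_cons with
    (Q := fun v => Carried acc v /\ Rabs (horner_val (be n) v - (be n - A * s_val)) <= 2 * dl).
  { intros v [B0 B1]. unfold Carried, Base, ClampOk, horner_val; cbn beta iota. aeval_simpl.
    rewrite B0, B1, (relu_eq0 0), (relu_id (x - a)), (relu_id acc) by lra.
    repeat split; try (f_equal; ring).
    replace (be n + A ^ 2 * (0 - 0) - A * s_val - (be n - A * s_val)) with 0 by ring.
    rewrite Rabs_R0; lra. }
  eapply (hoare_app (horner_layers be m n)); [apply (horner_layers_spec be M); auto|].
  apply hoare_cons with (Q := fun v => v 0%nat = x - a /\ 0 <= v 1%nat /\
       Rabs (v 1%nat - acc - A - horner be s_val n (be n - A * s_val)) <= 2 * dl);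
    [|apply hoare_nil].
  intros v [[[B0 B1] HCl] Er]. cbn beta iota.
  rewrite aeval_add, aeval_add, aeval_horner_form, aeval_cst by auto. aeval_simpl.
  rewrite B0, B1. apply Rabs_le_between in Hrun. apply Rabs_le_between in Er.
  rewrite !relu_id by lra. repeat split; try lra. apply Rabs_le. lra.
Qed.

End Gadgets.

Lemma length_saw_layers s m : length (saw_layers s m) = m.
Proof. revert s; induction m; intros; simpl; auto. Qed.

Lemma length_piece_layers A a c c' t r be m n :
  length (piece_layers A a c c' t r be m n) = (2 + n * S m)%nat.
Proof.
  unfold piece_layers. simpl. rewrite length_app. simpl.
  induction n; simpl; auto. rewrite length_app, length_saw_layers. lia.
Qed.

Lemma full_width_saw_layers s m : all_full_width (saw_layers s m).
Proof. revert s; induction m; intros; simpl; constructor; [reflexivity|apply IHm]. Qed.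

Lemma full_width_piece_layers A a c c' t r be m n :
  all_full_width (piece_layers A a c c' t r be m n).
Proof.
  unfold piece_layers. constructor; [reflexivity|].
  apply all_full_width_app; [|repeat constructor].
  induction n; simpl; [constructor|constructor; [reflexivity|]].
  apply all_full_width_app; auto. apply full_width_saw_layers.
Qed.

Section Network.
Variables (a A : R) (P m n : nat) (cc tt rr : nat -> R) (bb : nat -> nat -> R) (ob : R).

Fixpoint pieces_layers (k : nat) : list layer :=
  match k with
  | O => nil
  | S k' => pieces_layers k' ++ piece_layers A a (cc k') (cc (S k')) (tt k') (rr k') (bb k') m n
  end.

Definition InputL : layer :=
  layer_of (fun i => match i with 0 => aadd (avar 0) (acst (-a)) | _ => acst 0 end).

Definition net : network := Network (InputL :: pieces_layers P) (fst (avar 1)) ob.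

Lemma depth_net : depth net = (1 + P * (2 + n * S m))%nat.
Proof.
  unfold depth, net. simpl. f_equal. induction P as [|k IH]; simpl; auto.
  rewrite length_app, IH, length_piece_layers. lia.
Qed.

Lemma width_net : (width net <= regs)%nat.
Proof.
  apply width_le_regs. constructor; [reflexivity|].
  induction P as [|k IH]; simpl; [constructor|].
  apply all_full_width_app; auto. apply full_width_piece_layers.
Qed.

Definition piece_value (x : R) (i : nat) : R :=
  let s := s_val x (cc i) (cc (S i)) (tt i) (rr i) in horner (bb i) s n (bb i n - A * s).

Variables (M dl : R) (x : R).
Hypotheses (HA : 0 < A) (Hbb : forall i j, (i < P)%nat -> Rabs (bb i j) <= M)
  (Hrr : forall i, (i < P)%nat -> rr i <> 0)
  (HAM : 2 * M + A/2 + 2 * dl + 1/2 <= A) (Hdl : A^2 / 4 ^ S m <= dl)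
  (Hx : a <= x)
  (Hs : forall i, (i < P)%nat -> Rabs (s_val x (cc i) (cc (S i)) (tt i) (rr i)) <= 1/2).

Lemma pieces_layers_spec k : (k <= P)%nat ->
  Hoare (pieces_layers k) (Base x a 0)
    (fun v => v 0%nat = x - a /\ 0 <= v 1%nat /\
              Rabs (v 1%nat - INR k * A - fsum k (piece_value x)) <= INR k * (2 * dl)).
Proof.
  induction k; intros Hk v [H0 H1].
  - simpl. rewrite H0, H1. repeat split; try lra. apply Rabs_le. lra.
  - simpl pieces_layers. rewrite eval_hidden_app.
    destruct (IHk ltac:(lia) v (conj H0 H1)) as [[E0 [E1 E2]] ->].
    set (u := snd (eval_hidden (pieces_layers k) regs v)) in *.
    destruct (piece_spec A x a (cc k) (cc (S k)) (tt k) (rr k) (Hrr k ltac:(lia)) HA Hx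
       (bb k) M m n dl (u 1%nat) (fun j => Hbb k j ltac:(lia)) (Hs k ltac:(lia)) HAM Hdl E1
       u (conj E0 eq_refl)) as [[F0 [F1 F2]] ->].
    repeat split; auto. rewrite S_INR. simpl fsum. fold (piece_value x k) in F2.
    apply Rabs_le_between in F2. apply Rabs_le_between in E2. apply Rabs_le. lra.
Qed.

Lemma net_spec : Rabs (realize net x - ob - INR P * A - fsum P (piece_value x)) <= INR P * (2 * dl).
Proof.
  set (v0 := fun i => relu (aeval 1
                 (match i with 0 => aadd (avar 0) (acst (-a)) | _ => acst 0 end) (fun _ => x))).
  unfold realize, net. simpl hidden. simpl outW. simpl outb.
  change (eval_hidden (InputL :: pieces_layers P) 1 (fun _ => x))
    with (eval_hidden (pieces_layers P) regs v0).
  assert (H0 : v0 0%nat = x - a) by (unfold v0; aeval_simpl; apply relu_id; lra).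
  assert (H1 : v0 1%nat = 0) by (unfold v0; rewrite aeval_cst; apply relu_eq0; lra).
  destruct (pieces_layers_spec P (le_n _) v0 (conj H0 H1)) as [[_ [_ E]] Hd].
  destruct (eval_hidden (pieces_layers P) regs v0) as [d v]. simpl in *. subst d.
  rewrite (fsum_delta regs 1 v) by (unfold regs; lia).
  replace (v 1%nat + ob - ob) with (v 1%nat) by ring. exact E.
Qed.
End Network.

Lemma is_lim_seq_fsum u (l : R) : is_series u l -> is_lim_seq (fun N => fsum N u) l.
Proof.
  intros H. apply is_lim_seq_incr_1. apply is_lim_seq_ext with (sum_n u); [|exact H].
  intros N. induction N; simpl.
  - rewrite sum_O. simpl. lra.
  - rewrite sum_Sn, IHN. reflexivity.
Qed.

Lemma fsum_le_Series u : (forall k, 0 <= u k) -> ex_series u -> forall N, fsum N u <= Series u.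
Proof.
  intros Hu He. apply is_lim_seq_incr_compare.
  - apply is_lim_seq_fsum, Series_correct, He.
  - intros N; simpl. specialize (Hu N); lra.
Qed.

Lemma Rabs_lim_le w (l B : R) : is_lim_seq w l -> (forall N, Rabs (w N) <= B) -> Rabs l <= B.
Proof.
  intros Hw HB. apply (is_lim_seq_abs _ (Finite l)) in Hw.
  exact (is_lim_seq_le _ _ (Finite (Rabs l)) (Finite B) HB Hw (is_lim_seq_const B)).
Qed.

Lemma Rabs_pow_le_tail s q n k : Rabs s <= q -> q <= 1 -> (n <= k)%nat -> Rabs (s ^ k) <= q ^ n.
Proof.
  intros Hs Hq Hk. rewrite <- RPow_abs. pose proof (Rabs_pos s).
  apply Rle_trans with (q ^ k); [apply pow_incr; lra|].
  replace k with (n + (k - n))%nat by lia. rewrite pow_add.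
  assert (q ^ (k - n) <= 1) by (rewrite <- (pow1 (k - n)); apply pow_incr; lra).
  pose proof (pow_le q n ltac:(lra)). nra.
Qed.

Lemma series_tail_le (b : nat -> R) s q l n :
  is_series (fun k => b k * s ^ k) l -> ex_series (fun k => Rabs (b k)) -> Rabs s <= q -> q <= 1 ->
  Rabs (l - fsum n (fun k => b k * s ^ k)) <= Series (fun k => Rabs (b k)) * q ^ n.
Proof.
  intros Hl Hb Hs Hq.
  set (u := fun k => b k * s ^ k). set (ab := fun k => Rabs (b k)).
  assert (Hqn : 0 <= q ^ n) by (apply pow_le; pose proof (Rabs_pos s); lra).
  assert (Hstep : forall N,
    Rabs (fsum (N + n) u - fsum n u) <= (fsum (N + n) ab - fsum n ab) * q ^ n).
  { induction N as [|N IH]; simpl.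
    - replace (fsum n u - fsum n u) with 0 by ring. rewrite Rabs_R0. lra.
    - replace (fsum (N + n) u + u (N + n)%nat - fsum n u)
        with ((fsum (N + n) u - fsum n u) + u (N + n)%nat) by ring.
      eapply Rle_trans; [apply Rabs_triang|].
      assert (Rabs (u (N + n)%nat) <= ab (N + n)%nat * q ^ n).
      { unfold u, ab. rewrite Rabs_mult. apply Rmult_le_compat_l; [apply Rabs_pos|].
        apply Rabs_pow_le_tail; auto. lia. }
      lra. }
  apply (Rabs_lim_le (fun N => fsum (N + n) u - fsum n u)).
  - apply is_lim_seq_minus'; [|apply is_lim_seq_const].
    apply (is_lim_seq_incr_n (fun N => fsum N u) n), is_lim_seq_fsum, Hl.
  - intros N. eapply Rle_trans; [apply Hstep|]. apply Rmult_le_compat_r; auto.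
    pose proof (fsum_le_Series ab (fun k => Rabs_pos (b k)) Hb (N + n)).
    pose proof (fsum_nonneg n ab (fun k => Rabs_pos (b k))). lra.
Qed.

Definition local_expansion (f : R -> R) (lo hi t r : R) (b : nat -> R) (M : R) : Prop :=
  0 < r /\ (forall k, Rabs (b k) <= M) /\
  forall y, lo <= y <= hi -> Rabs ((y - t) / r) <= 1/2 /\
    forall n, Rabs (f y - fsum n (fun k => b k * ((y - t) / r) ^ k)) <= M * (/2) ^ n.

Lemma local_expansion_le f lo hi t r b M M' :
  M <= M' -> local_expansion f lo hi t r b M -> local_expansion f lo hi t r b M'.
Proof.
  intros HM [Hr [Hb Hy]]. split; [exact Hr|split].
  - intros k. specialize (Hb k); lra.
  - intros y Hy'. destruct (Hy y Hy') as [Hs Hn]. split; [exact Hs|].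
    intros n. pose proof (pow_le (/2) n ltac:(lra)). specialize (Hn n). nra.
Qed.

Lemma local_expansion_ext f g lo hi t r b M : (forall y, lo <= y <= hi -> f y = g y) ->
  local_expansion f lo hi t r b M -> local_expansion g lo hi t r b M.
Proof.
  intros Hfg [Hr [Hb Hy]]. split; [exact Hr|split; [exact Hb|]].
  intros y Hy'. rewrite <- Hfg by exact Hy'. auto.
Qed.

(* [p = (d, r, b, M)] is an expansion of [F] around [t] valid on every interval inside
   [[t - d, t + d]], packed as a tuple so that it can be chosen as a function of [t]. *)
Definition near_expansion (F : R -> R) (t : R) (p : R * R * (nat -> R) * R) : Prop :=
  let '(d, r, b, M) := p in
  0 < d /\ forall lo hi, t - d <= lo -> hi <= t + d -> local_expansion F lo hi t r b M.

Lemma analytic_near_expansion al be F t : analytic_on al be F -> al < t < be ->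
  exists p, near_expansion F t p.
Proof.
  intros HF Ht. destruct (HF t Ht) as [r [c [Hr [Hs Hrep]]]].
  set (d := Rmin (r / 2) (Rmin ((t - al) / 2) ((be - t) / 2))).
  assert (Hd : 0 < d /\ d <= r / 2 /\ d <= (t - al) / 2 /\ d <= (be - t) / 2).
  { unfold d. repeat split.
    - repeat apply Rmin_pos; lra.
    - apply Rmin_l.
    - eapply Rle_trans; [apply Rmin_r|apply Rmin_l].
    - eapply Rle_trans; [apply Rmin_r|apply Rmin_r]. }
  set (b := fun k => c k * r ^ k).
  assert (Hb : ex_series (fun k => Rabs (b k))).
  { eapply ex_series_ext; [|exact Hs]. intros k. unfold b.
    rewrite Rabs_mult, <- RPow_abs, (Rabs_pos_eq r) by lra. reflexivity. }
  exists (d, r, b, Series (fun k => Rabs (b k))). split; [lra|].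
  intros lo hi Hlo Hhi. split; [exact Hr|split].
  - intros k. apply Rle_trans with (fsum (S k) (fun j => Rabs (b j))).
    + apply (fsum_term_le (S k) (fun j => Rabs (b j))); [intros; apply Rabs_pos|lia].
    + apply fsum_le_Series; auto. intros; apply Rabs_pos.
  - intros y Hy. assert (Hyt : Rabs (y - t) <= r / 2) by (apply Rabs_le; lra).
    assert (Hs2 : Rabs ((y - t) / r) <= 1/2).
    { unfold Rdiv. rewrite Rabs_mult, (Rabs_pos_eq (/ r)) by (left; apply Rinv_0_lt_compat; lra).
      apply Rmult_le_reg_r with r; auto. rewrite Rmult_assoc, Rinv_l by lra. lra. }
    split; [exact Hs2|]. intros n. apply series_tail_le; [|exact Hb|lra|lra].
    apply (is_series_ext (fun k => c k * (y - t) ^ k)); [|apply Hrep; [lra|apply Rabs_def1; lra]].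
    intros k. unfold b. rewrite Rmult_assoc, <- Rpow_mult_distr. f_equal. f_equal. field. lra.
Qed.

Lemma uniform_partition_fine a b (delta : R -> R) : a <= b ->
  (forall t, a <= t <= b -> 0 < delta t) ->
  exists (P : nat) (tt : nat -> R), (0 < P)%nat /\
    forall i, (i < P)%nat -> a <= tt i <= b /\
      tt i - delta (tt i) <= a + INR i * ((b - a) / INR P) /\
      a + INR (S i) * ((b - a) / INR P) <= tt i + delta (tt i).
Proof.
  intros Hab Hd.
  set (half := fun t => if Rle_dec a t then if Rle_dec t b then delta t / 2 else 1 else 1).
  assert (Hhalf : forall t, 0 < half t).
  { intros t. unfold half. destruct (Rle_dec a t), (Rle_dec t b); try lra.
    specialize (Hd t (conj r r0)). lra. }
  destruct (compactness_value_1d a b (fun t => mkposreal _ (Hhalf t))) as [d Hcov]. simpl in Hcov.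
  destruct (INR_unbounded ((b - a) / d)) as [N HN].
  set (P := S N). set (h := (b - a) / INR P).
  assert (HP : 0 < INR P) by (unfold P; rewrite S_INR; pose proof (pos_INR N); lra).
  assert (Hb : a + INR P * h = b) by (unfold h; field; lra).
  assert (Hh : 0 <= h <= d).
  { pose proof (cond_pos d). split; [unfold h; apply Rle_mult_inv_pos; lra|].
    apply Rmult_le_reg_r with (INR P); auto.
    replace (h * INR P) with (b - a) by (unfold h; field; lra).
    apply Rmult_lt_compat_r with (r := d) in HN; auto. unfold Rdiv in HN.
    rewrite Rmult_assoc, Rinv_l in HN by lra. unfold P; rewrite S_INR. nra. }
  assert (Hmid : forall i, exists t, (i < P)%nat ->
    a <= t <= b /\ Rabs (a + (INR i + 1/2) * h - t) < half t /\ d <= half t).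
  { intros i. destruct (Nat.lt_ge_cases i P) as [Hi|Hi]; [|exists 0; intros; lia].
    assert (INR (S i) <= INR P) by (apply le_INR; lia). rewrite S_INR in *.
    assert (Hm : a <= a + (INR i + 1/2) * h <= b) by (pose proof (pos_INR i); split; nra).
    apply NNPP. intros Hn. apply (Hcov _ Hm). intros [t Ht]. apply Hn. exists t. auto. }
  destruct (functional_choice _ Hmid) as [tt Htt].
  exists P, tt. split; [unfold P; lia|]. intros i Hi.
  destruct (Htt i Hi) as [Ht [Hm Hdh]]. fold h.
  assert (E : half (tt i) = delta (tt i) / 2).
  { unfold half. destruct (Rle_dec a (tt i)), (Rle_dec (tt i) b); lra. }
  rewrite E in *. apply Rabs_def2 in Hm. rewrite S_INR. repeat split; try lra.
Qed.

Definition piecewise_expansion (f : R -> R) (a b : R) (P : nat) (cc tt rr : nat -> R)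
  (bb : nat -> nat -> R) (M : R) : Prop :=
  (0 < P)%nat /\ cc 0%nat = a /\ cc P = b /\ (forall i, cc i <= cc (S i)) /\
  forall i, (i < P)%nat -> local_expansion f (cc i) (cc (S i)) (tt i) (rr i) (bb i) M.

Lemma analytic_piecewise_expansion a b f : a <= b -> has_analytic_extension a b f ->
  exists P cc tt rr bb M, piecewise_expansion f a b P cc tt rr bb M.
Proof.
  intros Hab [al [be [F [Hal [Hbe [HF Hf]]]]]].
  assert (Hnear : forall t, exists p, al < t < be -> near_expansion F t p).
  { intros t. destruct (classic (al < t < be)) as [Ht|Ht].
    - destruct (analytic_near_expansion al be F t HF Ht) as [p Hp]. exists p; auto.
    - exists (0, 0, fun _ => 0, 0); tauto. }
  destruct (functional_choice _ Hnear) as [g Hg].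
  set (delta := fun t => fst (fst (fst (g t)))).
  assert (Hdelta : forall t, a <= t <= b -> 0 < delta t).
  { intros t Ht. specialize (Hg t ltac:(lra)). unfold delta.
    destruct (g t) as [[[d r] c] M]. apply Hg. }
  destruct (uniform_partition_fine a b delta Hab Hdelta) as [P [tt [HP Htt]]].
  set (h := (b - a) / INR P).
  assert (HPr : 0 < INR P) by (apply lt_0_INR; exact HP).
  assert (Hh : 0 <= h) by (unfold h; apply Rle_mult_inv_pos; lra).
  set (Ms := fun i => snd (g (tt i))).
  exists P, (fun i => a + INR i * h), tt, (fun i => snd (fst (fst (g (tt i))))),
    (fun i => snd (fst (g (tt i)))), (fsum P (fun i => Rabs (Ms i))).
  split; [exact HP|split; [|split; [|split]]].
  - simpl; ring.
  - unfold h; field; lra.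
  - intros i; rewrite S_INR; nra.
  - intros i Hi. destruct (Htt i Hi) as [Ht [Hlo Hhi]].
    assert (INR (S i) <= INR P) by (apply le_INR; lia).
    apply local_expansion_ext with F.
    { intros y Hy. apply Hf. pose proof (pos_INR i). split; [nra|].
      replace b with (a + INR P * h) by (unfold h; field; lra). nra. }
    apply local_expansion_le with (Ms i).
    { apply Rle_trans with (Rabs (Ms i)); [apply Rle_abs|].
      apply (fsum_term_le P (fun j => Rabs (Ms j))); auto. intros; apply Rabs_pos. }
    specialize (Hg (tt i) ltac:(lra)). unfold Ms, delta in *.
    destruct (g (tt i)) as [[[d r] c] M]. apply Hg; auto.
Qed.

Lemma horner_error f lo hi t r b M A y n : local_expansion f lo hi t r b M -> lo <= y <= hi ->
  0 <= A ->
  Rabs (f y - horner b ((y - t) / r) n (b n - A * ((y - t) / r))) <= (2 * M + A/2) * (/2) ^ n.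
Proof.
  intros [Hr [Hb Hy]] Hyl HA. destruct (Hy y Hyl) as [Hs Hn]. specialize (Hn n).
  set (s := (y - t) / r) in *. rewrite horner_eq.
  assert (Hsn : Rabs (s ^ n) <= (/2) ^ n)
    by (rewrite <- RPow_abs; apply pow_incr; split; [apply Rabs_pos|lra]).
  assert (Hbn : Rabs (b n - A * s) <= M + A/2).
  { unfold Rminus. eapply Rle_trans; [apply Rabs_triang|].
    rewrite Rabs_Ropp, Rabs_mult, (Rabs_pos_eq A) by lra.
    assert (A * Rabs s <= A * (1/2)) by (apply Rmult_le_compat_l; lra).
    specialize (Hb n). lra. }
  match goal with |- Rabs (_ - (?p + _)) <= _ =>
    replace (f y - (p + s ^ n * (b n - A * s))) with ((f y - p) - s ^ n * (b n - A * s)) by ring end.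
  eapply Rle_trans; [unfold Rminus at 1; apply Rabs_triang|]. rewrite Rabs_Ropp, Rabs_mult.
  assert (Rabs (s ^ n) * Rabs (b n - A * s) <= (/2) ^ n * (M + A/2))
    by (apply Rmult_le_compat; auto; apply Rabs_pos).
  lra.
Qed.

Lemma exists_piece (cc : nat -> R) x P : (forall i, cc i <= cc (S i)) -> (0 < P)%nat ->
  cc 0%nat <= x <= cc P -> exists i, (i < P)%nat /\ cc i <= x <= cc (S i).
Proof.
  intros Hc. induction P as [|P IH]; intros HP Hx; [lia|].
  destruct (Nat.eq_dec P 0) as [->|HP0]; [exists 0%nat; split; [lia|lra]|].
  destruct (Rle_dec x (cc P)).
  - destruct IH as [i [Hi Hx']]; [lia|lra|]. exists i. split; [lia|exact Hx'].
  - exists P. split; [lia|lra].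
Qed.

Lemma div_pow4_le_half_pow (A : R) k m0 : A ^ 2 <= 4 ^ m0 -> 4 * (A ^ 2 / 4 ^ S (k + m0)) <= (/2) ^ k.
Proof.
  intros HA. pose proof (pow_lt 4 k ltac:(lra)). pose proof (pow_lt 4 m0 ltac:(lra)).
  replace (4 ^ S (k + m0)) with (4 * 4 ^ k * 4 ^ m0) by (simpl; rewrite pow_add; ring).
  replace (4 * (A ^ 2 / (4 * 4 ^ k * 4 ^ m0))) with (A ^ 2 / 4 ^ m0 * / 4 ^ k) by (field; lra).
  rewrite <- pow_inv.
  apply Rle_trans with (1 * (/4) ^ k).
  - apply Rmult_le_compat_r; [apply pow_le; lra|].
    apply Rmult_le_reg_r with (4 ^ m0); auto. unfold Rdiv. rewrite Rmult_assoc, Rinv_l; lra.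
  - rewrite Rmult_1_l. apply pow_incr. lra.
Qed.

Lemma half_pow_le_exp_sqrt k L : (L < S k * S k)%nat -> (/2) ^ k <= 2 * exp (- ln 2 * sqrt (INR L)).
Proof.
  intros HL.
  assert (Hs : sqrt (INR L) <= INR k + 1).
  { rewrite <- (sqrt_square (INR k + 1)) by (pose proof (pos_INR k); lra).
    apply sqrt_le_1_alt. rewrite <- S_INR, <- mult_INR. apply le_INR. lia. }
  assert (Hl : 0 < ln 2) by (rewrite <- ln_1; apply ln_increasing; lra).
  assert (Hk : (/2) ^ k = exp (- (INR k * ln 2))).
  { rewrite exp_Ropp. change (exp (INR k * ln 2)) with (Rpower 2 (INR k)).
    rewrite Rpower_pow, pow_inv by lra. reflexivity. }
  rewrite Hk. replace (2 * exp (- ln 2 * sqrt (INR L))) with (exp (ln 2 + - ln 2 * sqrt (INR L)))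
    by (rewrite exp_plus, exp_ln by lra; reflexivity).
  assert (Hle : - (INR k * ln 2) <= ln 2 + - ln 2 * sqrt (INR L)) by nra.
  destruct Hle as [Hlt|Heq]; [left; apply exp_increasing, Hlt|rewrite Heq; lra].
Qed.

Lemma pow4_unbounded y : exists m, y <= 4 ^ m.
Proof.
  destruct (INR_unbounded y) as [m Hm]. exists m.
  assert (H : forall n, INR n + 1 <= 4 ^ n).
  { induction n as [|n IH]; [simpl; lra|]. rewrite S_INR.
    change (4 ^ S n) with (4 * 4 ^ n). pose proof (pos_INR n). lra. }
  specialize (H m). lra.
Qed.

Definition zero_net : network := Network nil (fun _ => 0) 0.

Lemma realize_zero_net x : realize zero_net x = 0.
Proof. unfold realize; simpl. ring. Qed.

Section Approximation.
Variables (f : R -> R) (a b : R) (P : nat) (cc tt rr : nat -> R) (bb : nat -> nat -> R) (M : R).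
Hypothesis Hpw : piecewise_expansion f a b P cc tt rr bb M.

Lemma piecewise_coef_bound_nonneg : 0 <= M.
Proof.
  destruct Hpw as [HP [_ [_ [_ Hloc]]]]. destruct (Hloc 0%nat HP) as [_ [Hb _]].
  pose proof (Hb 0%nat). pose proof (Rabs_pos (bb 0%nat 0%nat)). lra.
Qed.

Lemma piecewise_expansion_bound x : a <= x <= b -> Rabs (f x) <= M.
Proof.
  intros Hx. destruct Hpw as [HP [Hc0 [HcP [Hcc Hloc]]]].
  destruct (exists_piece cc x P Hcc HP ltac:(lra)) as [i [Hi Hxi]].
  destruct (Hloc i Hi) as [_ [_ Hy]]. destruct (Hy x Hxi) as [_ Hn].
  specialize (Hn 0%nat). simpl in Hn. rewrite Rminus_0_r in Hn. lra.
Qed.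

Definition scale : R := 4 * M + 4.

Definition approx_net (k m0 : nat) : network :=
  net a scale P (k + m0) k cc tt rr bb (f a - fsum P (fun i => f (cc i)) - INR P * scale).

Lemma approx_net_error k m0 x : scale ^ 2 <= 4 ^ m0 -> a <= x <= b ->
  Rabs (f x - realize (approx_net k m0) x) <= INR P * (2 * M + scale / 2 + 1) * (/2) ^ k.
Proof.
  intros Hm0 Hx. pose proof piecewise_coef_bound_nonneg as HM.
  destruct Hpw as [HP [Hc0 [HcP [Hcc Hloc]]]].
  set (A := scale) in *. set (dl := A ^ 2 / 4 ^ S (k + m0)).
  assert (HA : 0 < A) by (unfold A, scale; lra).
  pose proof (div_pow4_le_half_pow A k m0 Hm0) as Hdl. fold dl in Hdl.
  assert (Hdl0 : 0 <= dl) by (unfold dl; apply Rle_mult_inv_pos; [nra|apply pow_lt; lra]).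
  assert (Hk1 : (/2) ^ k <= 1) by (rewrite <- (pow1 k); apply pow_incr; lra).
  assert (Hclamp : forall i, cc i <= clamp x (cc i) (cc (S i)) <= cc (S i))
    by (intros; apply clamp_range, Hcc).
  set (ob := f a - fsum P (fun i => f (cc i)) - INR P * A).
  pose proof (net_spec a A P (k + m0) k cc tt rr bb ob M dl x HA
    (fun i j Hi => proj1 (proj2 (Hloc i Hi)) j) (fun i Hi => Rgt_not_eq _ _ (proj1 (Hloc i Hi)))
    ltac:(unfold A, scale in *; lra) (Rle_refl _) ltac:(lra)
    (fun i Hi => proj1 (proj2 (proj2 (Hloc i Hi)) _ (Hclamp i))) ) as Hnet.
  assert (Hpieces : Rabs (fsum P (fun i =>
      f (clamp x (cc i) (cc (S i))) - piece_value A k cc tt rr bb x i))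
    <= INR P * ((2 * M + A / 2) * (/2) ^ k)).
  { apply Rabs_fsum_le. intros i Hi. unfold piece_value, s_val; cbv zeta.
    apply (horner_error f (cc i) (cc (S i))); auto; lra. }
  rewrite fsum_sub in Hpieces.
  pose proof (clamp_telescope f cc x Hcc P) as Htel.
  rewrite fsum_sub, Hc0, HcP, clamp_id in Htel by exact Hx.
  assert (INR P * (2 * dl) <= INR P * (/2) ^ k) by (apply Rmult_le_compat_l; [apply pos_INR|lra]).
  unfold approx_net. fold A ob.
  apply Rabs_le_between in Hnet, Hpieces. apply Rabs_le. unfold ob in *. lra.
Qed.

Lemma approx_net_depth k m0 : (1 <= k)%nat ->
  (depth (approx_net k m0) <= (1 + P * (m0 + 4)) * (k * k))%nat.
Proof. intros Hk. unfold approx_net. rewrite depth_net. nia. Qed.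

Theorem approximation_rate : exists C gamma : R, 0 < C /\ 0 < gamma /\
  forall L : nat, exists Phi : network,
    (forall x, a <= x <= b -> Rabs (f x - realize Phi x) <= C * exp (- gamma * sqrt (INR L))) /\
    INR (depth Phi) <= C * INR L /\ INR (width Phi) <= C.
Proof.
  pose proof piecewise_coef_bound_nonneg as HM.
  destruct (pow4_unbounded (scale ^ 2)) as [m0 Hm0].
  set (E := INR P * (2 * M + scale / 2 + 1)).
  set (D := INR (1 + P * (m0 + 4))).
  assert (HE : 0 <= E) by (unfold E, scale; apply Rmult_le_pos; [apply pos_INR|lra]).
  assert (HD : 0 <= D) by apply pos_INR.
  exists (2 * E + D + INR regs + M), (ln 2). unfold regs; simpl INR.
  split; [lra|split; [rewrite <- ln_1; apply ln_increasing; lra|]]. intros L.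
  assert (Hexp : 0 < exp (- ln 2 * sqrt (INR L))) by apply exp_pos.
  destruct L as [|L'].
  - exists zero_net. simpl INR. rewrite sqrt_0, Rmult_0_r, exp_0. unfold depth, width; simpl.
    repeat split; try lra. intros x Hx. rewrite realize_zero_net, Rminus_0_r.
    pose proof (piecewise_expansion_bound x Hx). lra.
  - destruct (Nat.sqrt_spec (S L') (Nat.le_0_l _)) as [Hk1 Hk2].
    set (k := Nat.sqrt (S L')) in *. assert (Hk : (1 <= k)%nat) by nia.
    exists (approx_net k m0). split; [|split].
    + intros x Hx. eapply Rle_trans; [apply approx_net_error; auto|].
      fold E. apply Rle_trans with (E * (2 * exp (- ln 2 * sqrt (INR (S L'))))).
      * apply Rmult_le_compat_l; auto. apply half_pow_le_exp_sqrt, Hk2.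
      * nra.
    + apply Rle_trans with (D * INR (S L')); [|apply Rmult_le_compat_r; [apply pos_INR|lra]].
      unfold D. rewrite <- mult_INR. apply le_INR.
      eapply Nat.le_trans; [apply approx_net_depth; auto|]. nia.
    + pose proof (le_INR _ _ (width_net a scale P (k + m0) k cc tt rr bb
        (f a - fsum P (fun i => f (cc i)) - INR P * scale))).
      unfold regs in *. simpl in *. fold (approx_net k m0) in *. lra.
Qed.

End Approximation.

Theorem mainTheorem6 (a b : R) (f : R -> R) :
  has_analytic_extension a b f ->
  exists C gamma : R, 0 < C /\ 0 < gamma /\
    forall L : nat, exists Phi : network,
      (forall x, a <= x <= b ->
         Rabs (f x - realize Phi x) <= C * exp (- gamma * sqrt (INR L))) /\
      INR (depth Phi) <= C * INR L /\
      INR (width Phi) <= C.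
Proof.
  intros Hf. destruct (Rle_dec a b) as [Hab|Hba].
  - destruct (analytic_piecewise_expansion a b f Hab Hf) as [P [cc [tt [rr [bb [M Hpw]]]]]].
    exact (approximation_rate f a b P cc tt rr bb M Hpw).
  - exists 1, 1. split; [lra|split; [lra|]]. intros L. exists zero_net.
    unfold depth, width; simpl. pose proof (pos_INR L). repeat split; intros; lra.
Qed.
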